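(* Let $n\ge3$ be odd, $d,R\in\mathbb{Q}$, $d\ne0$, $R$ not a square, $D=d^2-R$, fix a square root $\sqrt R$, let $u$ be a zero of $f_n=f_n(Z,d,R)$ and $\zeta$ a primitive $n$th root of unity. For $k=0,\dots,n-1$ put $$u_k=\frac u2(\zeta^k+\zeta^{-k})+DA(u)\sqrt R(\zeta^k-\zeta^{-k})$$ (these are zeros of $f_n$; moreover $u\neq0$ and $A(u)\ne0$). Then for every odd $k\in\{1,\dots,n-1\}$, $$u_k=\frac u2F_k\Big(\frac{u_1+u_{n-1}}{u}\Big)+DA(u)P_k\Big(\frac{u_1-u_{n-1}}{2DA(u)}\Big),$$ and $u_{n-k}$ is obtained by the same expression with the plus sign between the two summands replaced by a minus sign.
   Context: For $k\ge1$, $F_k=\sum_{j=0}^{\lfloor k/2\rfloor}c_{k,j}Z^{k-2j}$ with $c_{k,j}=(-1)^j\frac{k}{k-j}\binom{k-j}{j}$ (so $2\cos(kx)=F_k(2\cos x)$). $f_n(Z,d,R)=\sqrt D^{\,n}F_n(Z/\sqrt D)-2dD^{(n-1)/2}=\sum_{j=0}^{(n-1)/2}c_{n,j}D^jZ^{n-2j}-2dD^{(n-1)/2}$. $A=\frac{1}{2R}\big(F_{n-1}(Z/\sqrt D)-\frac{dZ}{D}\big)\in\mathbb{Q}[Z]$, where $F_{n-1}(Z/\sqrt D)=\sum_{j=0}^{(n-1)/2}c_{n-1,j}D^{\,j-(n-1)/2}Z^{n-1-2j}$. For odd $k$, $P_k=i\sqrt R\,(-1)^{(k-1)/2}F_k\big(Z/(i\sqrt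 R)\big)=(-1)^{(k-1)/2}\sum_{j=0}^{(k-1)/2}c_{k,j}(-R)^{\,j-(k-1)/2}Z^{k-2j}\in\mathbb{Q}[Z]$. *)

From HB Require Import structures.
From mathcomp Require Import all_boot all_order all_algebra all_field.
Set Implicit Arguments. Unset Strict Implicit. Unset Printing Implicit Defensive.
Import Order.TTheory GRing.Theory Num.Theory.
Local Open Scope ring_scope.

Definition cc (k j : nat) : rat :=
  (-1) ^+ j * ((k%:R : rat) / (k - j)%:R) * ('C(k - j, j))%:R.

Definition Fpoly (k : nat) : {poly rat} :=
  \sum_(j < k./2.+1) cc k j *: 'X^(k - 2 * j).

Definition Dval (d R : rat) : rat := d ^+ 2 - R.

Definition fpoly (n : nat) (d R : rat) : {poly rat} :=
  \sum_(j < (n.-1)./2.+1) (cc n j * Dval d R ^+ j) *: 'X^(n - 2 * j)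
  - (2 * d * Dval d R ^+ ((n.-1)./2))%:P.

Definition Apoly (n : nat) (d R : rat) : {poly rat} :=
  (2 * R)^-1 *:
    (\sum_(j < (n.-1)./2.+1)
        (cc n.-1 j * Dval d R ^- ((n.-1)./2 - j)) *: 'X^(n.-1 - 2 * j)
     - (d / Dval d R) *: 'X).

Definition Ppoly (k : nat) (R : rat) : {poly rat} :=
  (-1) ^+ ((k.-1)./2) *:
    \sum_(j < (k.-1)./2.+1) (cc k j * (- R) ^- ((k.-1)./2 - j)) *: 'X^(k - 2 * j).

Definition evalC (p : {poly rat}) (x : algC) : algC := (map_poly ratr p).[x].

From HB Require Import structures.
From mathcomp Require Import all_boot all_order all_algebra all_field.
From mathcomp Require Import zify ring.
Import Order.TTheory GRing.Theory Num.Theory.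
Local Open Scope ring_scope.

(* The polynomials F_k, f_n, A and P_k are all (rescaled) Dickson polynomials
     D_k(p, s) = \sum_j c_{k,j} p^j s^{k-2j},
   characterised by the identity D_k(ab, a + b) = a^k + b^k.  We prove it from
   the three-term recurrence D_{k+2} = s D_{k+1} - p D_k, which reduces to the
   Pascal-type recurrence of the coefficients c_{k,j}.
   Writing n = 2m+1, a root u of f_n then splits as u = w + v with wv = D,
   w^n = D^m (d - sqrt R) and v^n = D^m (d + sqrt R); evaluating A at u gives
   D A(u) sqrt R = (w - v)/2.  Hence u_k = w zeta^k + v zeta^-k, which makes
   u_k a root again, forces u != 0 and A(u) != 0, and (through the Dickson
   identity with (a, b) = (zeta, zeta^-1) and (sqrt R zeta, -sqrt R zeta^-1))
   yields the expressions of u_k and u_{n-k} through F_k and P_k.  The last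
   step only uses the shape of u_k, so it is stated for arbitrary u, A and R. *)

Lemma cc_small k j : (k < 2 * j)%N -> cc k j = 0.
Proof. by move=> h; rewrite /cc bin_small ?mulr0 //; lia. Qed.

Lemma cc0 k : cc k.+1 0 = 1.
Proof. by rewrite /cc subn0 bin0 expr0 mul1r mulr1 divff // pnatr_eq0. Qed.

Lemma cc21 : cc 2 1 = - 2%:R.
Proof. by rewrite /cc /= expr1 divr1 mulN1r. Qed.

(* Pascal-type recurrence c_{k+2,j+1} = c_{k+1,j+1} - c_{k,j}, written with
   k = m + 2j so that all binomial arguments are explicit. *)
Lemma cc_rec m i : (0 < m + 2 * i)%N ->
  cc (m + 2 * i).+2 i.+1 = cc (m + 2 * i).+1 i.+1 - cc (m + 2 * i) i.
Proof.
move=> hpos; rewrite /cc.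
have -> : ((m + 2 * i).+2 - i.+1 = (m + i).+1)%N by lia.
have -> : ((m + 2 * i).+1 - i.+1 = m + i)%N by lia.
have -> : ((m + 2 * i) - i = m + i)%N by lia.
have i1 : (i.+1%:R : rat) != 0 by rewrite pnatr_eq0.
have binS : ('C((m + i).+1, i.+1)%:R : rat) =
    (m + i).+1%:R * 'C(m + i, i)%:R / i.+1%:R.
  have e : ('C((m + i).+1, i.+1) * i.+1 = (m + i).+1 * 'C(m + i, i))%N.
    by rewrite mulnC -mul_bin_diag.
  by rewrite -natrM -e natrM mulfK.
have binL : ('C(m + i, i.+1)%:R : rat) = m%:R * 'C(m + i, i)%:R / i.+1%:R.
  have e : ('C(m + i, i.+1) * i.+1 = m * 'C(m + i, i))%N.
    by rewrite mulnC mul_bin_left; congr (_ * _)%N; lia.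
  by rewrite -natrM -e natrM mulfK.
rewrite binS binL exprS.
have mi : ((m + i)%:R : rat) != 0 by rewrite pnatr_eq0; lia.
have mi1 : ((m + i).+1%:R : rat) != 0 by rewrite pnatr_eq0.
move: mi mi1 i1; rewrite -!natr1 !(natrD, natrM) => mi mi1 i1.
by field; rewrite mi1 mi i1.
Qed.

Section Dickson.
Variable F : numFieldType.
Implicit Types (p s a b : F).

Definition dterm p s k j : F := ratr (cc k j) * p ^+ j * s ^+ (k - 2 * j).

Definition dickson k p s : F := \sum_(j < k./2.+1) dterm p s k j.

Lemma dickson_widen k N p s :
  (k./2 < N)%N -> dickson k p s = \sum_(j < N) dterm p s k j.
Proof.
move=> h; rewrite /dickson (big_ord_widen N (dterm p s k)) // big_mkcond /=.
apply: eq_bigr => j _; case: ifP => // hj.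
have : (k./2 < j)%N by rewrite ltnNge -ltnS hj.
by rewrite ltn_half_double -mul2n => hk; rewrite /dterm cc_small // rmorph0 !mul0r.
Qed.

Lemma dterm_rec k i p s : (0 < k)%N ->
  dterm p s k.+2 i.+1 = s * dterm p s k.+1 i.+1 - p * dterm p s k i.
Proof.
move=> hk; case: (leqP (2 * i) k) => hi; last first.
  by rewrite /dterm !cc_small ?rmorph0; try lia; ring.
have [m ekm] : exists m, k = (m + 2 * i)%N by exists (k - 2 * i)%N; lia.
rewrite {}ekm in hk hi *; rewrite /dterm cc_rec // rmorphB.
have -> : ((m + 2 * i).+2 - 2 * i.+1 = m)%N by lia.
have -> : ((m + 2 * i) - 2 * i = m)%N by lia.
case: m {hk hi} => [|m].
  by rewrite (@cc_small (0 + 2 * i).+1 i.+1) ?rmorph0 ?exprS; [ring | lia].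
have -> : ((m.+1 + 2 * i).+1 - 2 * i.+1 = m)%N by lia.
by rewrite !exprS; ring.
Qed.

Lemma dickson_rec k p s : (0 < k)%N ->
  dickson k.+2 p s = s * dickson k.+1 p s - p * dickson k p s.
Proof.
move=> hk.
have widen j : (j <= k.+2)%N -> (j./2 < k.+3)%N.
  by move=> hj; rewrite ltn_half_double -mul2n; lia.
rewrite !(@dickson_widen _ k.+3) ?widen; try lia.
rewrite big_ord_recl [in X in s * X]big_ord_recl [in X in p * X]big_ord_recr /=.
have -> : dterm p s k (@ord_max k.+2) = 0.
  by rewrite /dterm cc_small ?rmorph0 ?mul0r //=; lia.
have -> : dterm p s k.+2 (@ord0 k.+2) = s * dterm p s k.+1 (@ord0 k.+2).
  by rewrite /dterm /= !cc0 !subn0 rmorph1 exprS; ring.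
rewrite addr0 mulrDr -addrA; congr (_ + _).
rewrite !mulr_sumr -sumrB; apply: eq_bigr => i _.
by rewrite /bump /= add1n dterm_rec.
Qed.

Lemma dickson_pow k a b : (0 < k)%N -> dickson k (a * b) (a + b) = a ^+ k + b ^+ k.
Proof.
suff H j : dickson j.+1 (a * b) (a + b) = a ^+ j.+1 + b ^+ j.+1 /\
           dickson j.+2 (a * b) (a + b) = a ^+ j.+2 + b ^+ j.+2.
  by case: k => // k _; case: (H k).
elim: j => [|j [IH1 IH2]].
  rewrite /dickson /= !big_ord_recr !big_ord0 /dterm /= cc0 cc21.
  by rewrite rmorph1 rmorphN rmorph_nat; split; ring.
by split=> //; rewrite dickson_rec // IH1 IH2 !exprS; ring.
Qed.

End Dickson.

Arguments dickson {F}.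

Lemma half_odd_pred m : (((2 * m).+1).-1)./2 = m.
Proof. by rewrite /= mul2n half_double. Qed.
Lemma half_odd m : ((2 * m).+1)./2 = m.
Proof. by rewrite /= mul2n uphalf_double. Qed.
Lemma half_even m : (2 * m)./2 = m.
Proof. by rewrite mul2n half_double. Qed.

Lemma odd_double k : odd k -> exists k', k = (2 * k').+1.
Proof. by move=> hk; exists k./2; move: (odd_double_half k); rewrite hk /= -mul2n; lia. Qed.

Lemma sign_odd (T : pzRingType) k : (-1) ^+ (2 * k).+1 = -1 :> T.
Proof. by rewrite exprS exprM sqrrN !expr1n mulr1. Qed.

Lemma evalC_sum I (r : seq I) (P : I -> {poly rat}) x :
  evalC (\sum_(j <- r) P j) x = \sum_(j <- r) evalC (P j) x.
Proof. by rewrite /evalC rmorph_sum horner_sum. Qed.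
Lemma evalCB p q x : evalC (p - q) x = evalC p x - evalC q x.
Proof. by rewrite /evalC rmorphB hornerD hornerN. Qed.
Lemma evalCZ c p x : evalC (c *: p) x = ratr c * evalC p x.
Proof. by rewrite /evalC map_polyZ hornerZ. Qed.
Lemma evalCC c x : evalC c%:P x = ratr c.
Proof. by rewrite /evalC map_polyC hornerC. Qed.
Lemma evalCX x : evalC 'X x = x.
Proof. by rewrite /evalC map_polyX hornerX. Qed.
Lemma evalCXn k x : evalC 'X^k x = x ^+ k.
Proof. by rewrite /evalC map_polyXn hornerXn. Qed.

Lemma clear_neg_powers (D : algC) k m (c : nat -> algC) x : D != 0 ->
  D ^+ m * \sum_(j < m.+1) c j * D ^- (m - j) * x ^+ (k - 2 * j) =
  \sum_(j < m.+1) c j * D ^+ j * x ^+ (k - 2 * j).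
Proof.
move=> hD; rewrite mulr_sumr; apply: eq_bigr => j _.
have hj : (j <= m)%N by rewrite -ltnS.
have -> : D ^+ m = D ^+ j * D ^+ (m - j) by rewrite -exprD subnKC.
have hE : D ^+ (m - j) != 0 by rewrite expf_neq0.
by field; rewrite hE.
Qed.

Lemma evalC_Fpoly k x : evalC (Fpoly k) x = dickson k 1 x.
Proof.
rewrite /Fpoly evalC_sum /dickson; apply: eq_bigr => j _.
by rewrite evalCZ evalCXn /dterm expr1n mulr1.
Qed.

Lemma evalC_fpoly m d R x : evalC (fpoly (2 * m).+1 d R) x =
  dickson (2 * m).+1 (ratr (Dval d R)) x - 2 * ratr d * ratr (Dval d R) ^+ m.
Proof.
rewrite /fpoly evalCB evalC_sum evalCC.
rewrite !rmorphM rmorphXn rmorph_nat half_odd_pred /dickson half_odd.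
by congr (_ - _); apply: eq_bigr => j _; rewrite evalCZ evalCXn rmorphM rmorphXn ?mulrA.
Qed.

Lemma evalC_Apoly m d R x : Dval d R != 0 -> R != 0 ->
  ratr (Dval d R) ^+ m * (2 * ratr R * evalC (Apoly (2 * m).+1 d R) x) =
  dickson (2 * m) (ratr (Dval d R)) x
  - ratr (Dval d R) ^+ m * (ratr d / ratr (Dval d R) * x).
Proof.
set D : algC := ratr (Dval d R) => hD hR.
have hD' : D != 0 by rewrite fmorph_eq0.
have hR' : 2 * ratr R != 0 :> algC by rewrite mulf_neq0 ?fmorph_eq0 ?pnatr_eq0.
rewrite /Apoly evalCZ evalCB evalC_sum evalCZ evalCX /=.
rewrite half_even fmorphV rmorphM rmorph_nat (rmorphM _ d) fmorphV -/D.
rewrite [2 * ratr R * _]mulrA mulfV // mul1r mulrBr; congr (_ - _).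
rewrite (eq_bigr (fun j : 'I_m.+1 =>
    ratr (cc (2 * m) j) * D ^- (m - j) * x ^+ (2 * m - 2 * j))); last first.
  by move=> j _; rewrite evalCZ evalCXn rmorphM fmorphV rmorphXn.
by rewrite (@clear_neg_powers _ (2 * m) m (fun j => ratr (cc (2 * m) j))) // /dickson half_even.
Qed.

Lemma evalC_Ppoly k R x : R != 0 ->
  (- ratr R) ^+ k * evalC (Ppoly (2 * k).+1 R) x =
  (-1) ^+ k * dickson (2 * k).+1 (- ratr R) x.
Proof.
move=> hR; have hR' : - ratr R != 0 :> algC by rewrite oppr_eq0 fmorph_eq0.
rewrite /Ppoly evalCZ evalC_sum /= half_even rmorphXn rmorphN1 mulrCA.
congr (_ * _).
rewrite (eq_bigr (fun j : 'I_k.+1 =>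
    ratr (cc (2 * k).+1 j) * (- ratr R) ^- (k - j) * x ^+ ((2 * k).+1 - 2 * j))).
  by rewrite (@clear_neg_powers _ (2 * k).+1 k (fun j => ratr (cc (2 * k).+1 j))) // /dickson half_odd.
by move=> j _; rewrite evalCZ evalCXn rmorphM fmorphV rmorphXn rmorphN.
Qed.

Lemma Fpoly_sum_inv k x : (0 < k)%N -> x != 0 ->
  evalC (Fpoly k) (x + x^-1) = x ^+ k + x ^- k.
Proof.
by move=> hk hx; rewrite evalC_Fpoly -[X in dickson _ X _](mulfV hx) dickson_pow // exprVn.
Qed.

Lemma Ppoly_diff_inv k R r x : odd k -> R != 0 -> r ^+ 2 = ratr R -> x != 0 ->
  evalC (Ppoly k R) (r * (x - x^-1)) = r * (x ^+ k - x ^- k).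
Proof.
move=> /odd_double [k' ->] hR hr hx.
have hRk : (- ratr R) ^+ k' != 0 :> algC by rewrite expf_neq0 // oppr_eq0 fmorph_eq0.
apply: (mulfI hRk); rewrite evalC_Ppoly //.
have hprod : (r * x) * (- (r * x^-1)) = - ratr R by rewrite -hr; field.
have -> : r * (x - x^-1) = r * x + - (r * x^-1) by ring.
rewrite -[X in dickson _ X _]hprod dickson_pow //.
rewrite (exprNn (r * x^-1)) (exprNn (ratr R)) sign_odd (exprMn _ r x) (exprMn _ r x^-1) exprVn.
by rewrite [r ^+ _]exprS exprM hr; ring.
Qed.

Lemma odd_index_expansion (n k : nat) (R : rat) (u c r z : algC) :
  let t := fun i : nat => u / 2 * (z ^+ i + z ^- i) + c * r * (z ^+ i - z ^- i) in
  z ^+ n = 1 -> u != 0 -> c != 0 -> R != 0 -> r ^+ 2 = ratr R ->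
  odd k -> (1 <= k < n)%N ->
  t k = u / 2 * evalC (Fpoly k) ((t 1%N + t n.-1) / u)
        + c * evalC (Ppoly k R) ((t 1%N - t n.-1) / (2 * c))
  /\
  t (n - k)%N = u / 2 * evalC (Fpoly k) ((t 1%N + t n.-1) / u)
        - c * evalC (Ppoly k R) ((t 1%N - t n.-1) / (2 * c)).
Proof.
move=> t hzn hu hc hR hr hk /andP [hk1 hkn].
have hz : z != 0.
  apply: contra_eq_neq hzn => ->; rewrite expr0n gtn_eqF; last by lia.
  by rewrite eq_sym oner_eq0.
have z_compl i : (i <= n)%N -> z ^+ (n - i) = z ^- i.
  by move=> hi; apply: (mulIf (expf_neq0 i hz)); rewrite -exprD subnK // hzn mulVf ?expf_neq0.
have hsum : (t 1%N + t n.-1) / u = z + z^-1.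
  by rewrite /t -subn1 z_compl ?invrK ?expr1; [field; rewrite hu hz | lia].
have hdiff : (t 1%N - t n.-1) / (2 * c) = r * (z - z^-1).
  by rewrite /t -subn1 z_compl ?invrK ?expr1; [field; rewrite hc hz | lia].
rewrite hsum hdiff Fpoly_sum_inv // Ppoly_diff_inv // /t.
rewrite z_compl ?invrK; last exact: ltnW.
by split; ring.
Qed.

Set Implicit Arguments. Unset Strict Implicit.
Section RootStructure.
Variables (m : nat) (d R : rat) (r u : algC).
Hypotheses (m_gt0 : (0 < m)%N) (R_neq0 : R != 0)
  (Dval_neq0 : Dval d R != 0) (r2 : r ^+ 2 = ratr R)
  (root_u : evalC (fpoly (2 * m).+1 d R) u = 0).

Local Notation N := (2 * m).+1.
Local Notation D := (ratr (Dval d R) : algC).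

Lemma D_neq0 : D != 0. Proof. by rewrite fmorph_eq0. Qed.

Lemma r_neq0 : r != 0.
Proof. by apply: contra_eq_neq r2 => ->; rewrite expr0n eq_sym fmorph_eq0. Qed.

Lemma fpoly_split a b :
  a * b = D -> evalC (fpoly N d R) (a + b) = a ^+ N + b ^+ N - 2 * ratr d * D ^+ m.
Proof. by move=> hab; rewrite evalC_fpoly -hab dickson_pow. Qed.

Lemma root_split : exists w v,
  [/\ w + v = u, w * v = D, w ^+ N = D ^+ m * (ratr d - r)
    & v ^+ N = D ^+ m * (ratr d + r)].
Proof.
pose s := sqrtC (u ^+ 2 - 4 * D).
have hs : s ^+ 2 = u ^+ 2 - 4 * D by exact: sqrtCK.
pose w0 := (u + s) / 2; pose v0 := (u - s) / 2.
have sum0 : w0 + v0 = u by rewrite /w0 /v0; field.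
have prod0 : w0 * v0 = D.
  transitivity ((u ^+ 2 - s ^+ 2) / 4); first by rewrite /w0 /v0; field.
  by rewrite hs; field.
have hsumN : v0 ^+ N = 2 * ratr d * D ^+ m - w0 ^+ N.
  by apply/eqP; rewrite -subr_eq0 -root_u -sum0 fpoly_split //; apply/eqP; ring.
have hprodN : w0 ^+ N * v0 ^+ N = D ^+ m * D ^+ m * D.
  by rewrite -exprMn prod0 exprS mul2n -addnn exprD; ring.
have hD : D = ratr d ^+ 2 - ratr R by rewrite /Dval rmorphB rmorphXn.
have hquad : (w0 ^+ N - ratr d * D ^+ m) ^+ 2 = (D ^+ m * r) ^+ 2.
  transitivity (ratr d ^+ 2 * D ^+ m * D ^+ m - w0 ^+ N * v0 ^+ N).
    by rewrite hsumN; ring.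
  by rewrite hprodN [(_ * r) ^+ 2]exprMn r2 hD; ring.
move/eqP: hquad; rewrite eqf_sqr => /orP [] /eqP /(canRL (subrK _)) hw0.
  exists v0, w0; split; rewrite 1?addrC 1?mulrC ?hsumN ?hw0 //; ring.
by exists w0, v0; split; rewrite ?hsumN ?hw0 //; ring.
Qed.

Variables (w v : algC).
Hypotheses (sum_wv : w + v = u) (prod_wv : w * v = D)
  (w_pow : w ^+ N = D ^+ m * (ratr d - r)) (v_pow : v ^+ N = D ^+ m * (ratr d + r)).

Let Au := evalC (Apoly N d R) u.

Lemma Apoly_at_root : D * Au * r = (w - v) / 2.
Proof.
have hDm : D ^+ m != 0 by rewrite expf_neq0 ?D_neq0.
have h2R : 2 * ratr R != 0 :> algC by rewrite mulf_neq0 ?pnatr_eq0 ?fmorph_eq0.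
have hDick : dickson (2 * m) D u = w ^+ (2 * m) + v ^+ (2 * m).
  by rewrite -sum_wv -prod_wv dickson_pow //; lia.
have hA := evalC_Apoly m d R u Dval_neq0 R_neq0; rewrite -/Au hDick in hA.
have hW : w ^+ (2 * m) * D = v * (D ^+ m * (ratr d - r)) by rewrite -w_pow -prod_wv exprS; ring.
have hV : v ^+ (2 * m) * D = w * (D ^+ m * (ratr d + r)) by rewrite -v_pow -prod_wv exprS; ring.
have key : 2 * ratr R * Au * D = r * (w - v).
  apply: (mulfI hDm).
  transitivity (D ^+ m * (2 * ratr R * Au) * D); first ring.
  rewrite hA; transitivity (w ^+ (2 * m) * D + v ^+ (2 * m) * D - D ^+ m * ratr d * u).
    by field; rewrite D_neq0.
  by rewrite hW hV -sum_wv; ring.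
apply: (mulfI h2R); transitivity (2 * ratr R * Au * D * r); first ring.
by rewrite key -r2; field.
Qed.

(* u = 0 would force v = -w, hence 2 d D^m = w^n + v^n = 0. *)
Lemma root_neq0 : d != 0 -> u != 0.
Proof.
move=> d_neq0; apply/eqP => hu.
have hv : v = - w by apply/eqP; rewrite -subr_eq0 opprK addrC sum_wv hu.
have hvw : v ^+ N = - w ^+ N by rewrite hv exprNn sign_odd mulN1r.
have : 2 * ratr d * D ^+ m = 0.
  transitivity (D ^+ m * (ratr d + r) + D ^+ m * (ratr d - r)); first ring.
  by rewrite -v_pow -w_pow hvw addNr.
have h2d : 2 * ratr d != 0 :> algC by rewrite mulf_neq0 ?pnatr_eq0 ?fmorph_eq0.
by move=> /eqP; apply/negP; rewrite mulf_neq0 // expf_neq0 // D_neq0.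
Qed.

(* A(u) = 0 would force w = v, hence 2 r D^m = v^n - w^n = 0. *)
Lemma Apoly_root_neq0 : Au != 0.
Proof.
apply/eqP => hA; move: Apoly_at_root; rewrite hA mulr0 mul0r => /esym /eqP.
rewrite mulf_eq0 invr_eq0 pnatr_eq0 orbF subr_eq0 => /eqP hwv.
have : 2 * r * D ^+ m = 0.
  transitivity (D ^+ m * (ratr d + r) - D ^+ m * (ratr d - r)); first ring.
  by rewrite -v_pow -w_pow hwv subrr.
have h2r : 2 * r != 0 by rewrite mulf_neq0 ?pnatr_eq0 ?r_neq0.
by move=> /eqP; apply/negP; rewrite mulf_neq0 // expf_neq0 // D_neq0.
Qed.

(* Twisting the splitting by an n-th root of unity gives again a root. *)
Lemma twisted_root x : x ^+ N = 1 ->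
  evalC (fpoly N d R) (u / 2 * (x + x^-1) + D * Au * r * (x - x^-1)) = 0.
Proof.
move=> hx; have hx0 : x != 0 by apply: contra_eq_neq hx => ->; rewrite expr0n /= eq_sym oner_eq0.
have -> : u / 2 * (x + x^-1) + D * Au * r * (x - x^-1) = w * x + v * x^-1.
  by rewrite Apoly_at_root -sum_wv; field.
rewrite fpoly_split; last by rewrite mulrACA prod_wv mulfV ?mulr1.
by rewrite (exprMn _ w x) (exprMn _ v x^-1) exprVn hx invr1 w_pow v_pow; ring.
Qed.

End RootStructure.
Unset Implicit Arguments. Set Strict Implicit.

Theorem theorem3 (n : nat) (d R : rat) (sqR u z : algC) :
  (3 <= n)%N -> odd n -> d != 0 -> ~ (exists q : rat, q ^+ 2 = R) ->
  sqR ^+ 2 = ratr R ->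
  evalC (fpoly n d R) u = 0 ->
  n.-primitive_root z ->
  let D : algC := ratr (Dval d R) in
  let Au := evalC (Apoly n d R) u in
  let uk := fun k : nat =>
    u / 2 * (z ^+ k + z ^- k) + D * Au * sqR * (z ^+ k - z ^- k) in
  [/\ forall k : nat, (k < n)%N -> evalC (fpoly n d R) (uk k) = 0,
      u != 0, Au != 0 &
      forall k : nat, odd k -> (1 <= k < n)%N ->
        uk k = u / 2 * evalC (Fpoly k) ((uk 1%N + uk n.-1) / u)
               + D * Au * evalC (Ppoly k R) ((uk 1%N - uk n.-1) / (2 * D * Au))
        /\
        uk (n - k)%N = u / 2 * evalC (Fpoly k) ((uk 1%N + uk n.-1) / u)
               - D * Au * evalC (Ppoly k R) ((uk 1%N - uk n.-1) / (2 * D * Au))].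
Proof.
move=> hn3 /odd_double [m en]; subst n; move=> hd hRsq hsq hu hz D Au uk.
have m_gt0 : (0 < m)%N by lia.
have hDv : Dval d R != 0.
  by apply: contra_not_neq hRsq => /eqP; rewrite subr_eq0 => /eqP <-; exists d.
have hR : R != 0 by apply: contra_not_neq hRsq => ->; exists 0; rewrite expr0n.
have [w [v [hs hp hw hv]]] := root_split hsq hu.
have hu0 := root_neq0 hDv hs hw hv hd.
have hAu := Apoly_root_neq0 m_gt0 hR hDv hsq hs hp hw hv.
split => // [k _ | k hk hkn].
  apply: (twisted_root m_gt0 hR hDv hsq hs hp hw hv).
  by rewrite exprAC (prim_expr_order hz) expr1n.
have hc : D * Au != 0 by rewrite mulf_neq0 ?fmorph_eq0.
rewrite -[2 * D * Au]mulrA.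
exact: odd_index_expansion (prim_expr_order hz) hu0 hc hR hsq hk hkn.
Qed.
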